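(* Let $d\in\mathbb N$ and $\varepsilon\in(0,1]$, and let $h=h(d,\varepsilon)$ be the height and $\mathcal P^d_\varepsilon$ the set of leaves of Thiémard's decomposition process (see context). Then $$h=\min\{r\in\mathbb N_0:\ W(Q^{(r)}_{\mathbf 1_r})\le\varepsilon\}$$ (with $Q^{(0)}_{\mathbf 1_0}:=Q^{(0)}_0=I^d$), and $$h\le \lceil d(\varepsilon^{-1}-1)\rceil.$$ Moreover, if $d=2$ then $$|\mathcal P^2_\varepsilon|\le 2\Big(\frac1\varepsilon+\frac12\Big)\frac1\varepsilon,$$ and if $d\ge3$ then $$|\mathcal P^d_\varepsilon|\le \frac{d^d}{d!}\Big(\frac1\varepsilon-\frac12\Big(1-\frac3d\Big)\Big)^d\le \frac{d^d}{d!}\,\varepsilon^{-d}.$$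
   Context: Fix $d\in\mathbb N$ and $\varepsilon\in(0,1]$. For $x,y\in[0,1]^d$ write $[x,y)=\prod_{i=1}^d[x_i,y_i)$ and define the weight $W([x,y))=\prod_{i=1}^d y_i-\prod_{i=1}^d x_i$. Thiémard's decomposition process generates boxes, each with a type in $\{1,\dots,d+1\}$. It starts with $I^d=[0,1)^d=[(0,\dots,0),(1,\dots,1))$, of type $1$. Whenever a generated box $P=[\alpha,\beta)$ has type $j\le d$ and $W(P)>\varepsilon$, it is decomposed (procedure DECOMPOSE$(P,j)$) as follows: put $$\delta^P=\left(\frac{\prod_{i=1}^d\beta_i-\varepsilon}{\prod_{i=1}^{j-1}\alpha_i\prod_{i=j}^d\beta_i}\right)^{1/(d-j+1)},\qquad \gamma^P_i=\alpha_i\ (i<j),\quad \gamma^P_i=\delta^P\beta_i\ (i\ge j).$$ The children of $P$ are the boxes $Q^P_k=[a^{(k)},b^{(k)})$ for $k=j,\dots,d$, where $a^{(k)}_i=\gamma^P_i$ for $i<k$, $a^{(k)}_i=\alpha_i$ for $i\ge k$, $b^{(k)}_k=\gamma^P_k$, $b^{(k)}_i=\beta_i$ for $i\neq k$; the box $Q^P_k$ has type $k$. In addition $P$ has the child $Q^P_{d+1}=[\gamma^P,\beta)$ of type $d+1$. A generated box of type $d+1$ or of weight at most $\varepsilon$ is not decomposed. (Known facts from Thiémard: $\delta^P\in(0,1)$; the process terminates after finitely many steps; $W(Q^P_{d+1})=\varepsilon$ and $W(Q^P_k)=\delta^PW(P)$ for $j\le k\le d$.) $\mathcal P^d_\varepsilon$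 denotes the set of all generated boxes that are not decomposed (the leaves of the process). Indexing: for $r\in\mathbb N$ let $S^r=\{\boldsymbol i\in\mathbb N^r: 1\le i_1\le\dots\le i_r\le d\}$, $S^0=\{0\}$, and $\mathbf 1_r=(1,\dots,1)\in\mathbb N^r$. Put $Q^{(0)}_0=I^d$, $Q^{(1)}_{j_1}=Q^{I^d}_{j_1}$ ($j_1=1,\dots,d$, defined when $W(I^d)>\varepsilon$), and for $\boldsymbol j\in S^r$ with $Q^{(r)}_{\boldsymbol j}$ generated and $W(Q^{(r)}_{\boldsymbol j})>\varepsilon$, $Q^{(r+1)}_{(\boldsymbol j,j_{r+1})}=Q^{Q^{(r)}_{\boldsymbol j}}_{j_{r+1}}$ for $j_{r+1}=j_r,\dots,d$. The height $h=h(d,\varepsilon)$ of the partition is $0$ if $W(I^d)\le\varepsilon$, and otherwise the largest $h\in\mathbb N$ such that there is $\boldsymbol j\in S^{h-1}$ with $Q^{(h-1)}_{\boldsymbol j}$ generated and $W(Q^{(h-1)}_{\boldsymbol j})>\varepsilon$. *)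

From Stdlib Require Import Reals Lra Lia List Arith.
Open Scope R_scope.

(* Points of [0,1]^d are functions nat -> R; only coordinates 1..d matter.
   All generated boxes have lower corner 0 and upper corner 1 outside 1..d,
   so Leibniz equality of boxes coincides with equality on coordinates 1..d. *)
Definition point := nat -> R.
Definition box := (point * point)%type.   (* [alpha, beta) *)

Fixpoint prodn (f : point) (a n : nat) : R :=
  match n with
  | O => 1
  | S n' => f a * prodn f (S a) n'
  end.

Definition prodd (d : nat) (x : point) : R := prodn x 1 d.

Definition W (d : nat) (P : box) : R := prodd d (snd P) - prodd d (fst P).

Definition Id : box := (fun _ => 0, fun _ => 1).

Definition delta (d : nat) (eps : R) (P : box) (j : nat) : R :=
  let (al, be) := P in
  Rpower ((prodd d be - eps) /
          (prodn al 1 (j - 1) * prodn be j (d - j + 1)))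
         (/ INR (d - j + 1)).

Definition gamma (d : nat) (eps : R) (P : box) (j : nat) : point :=
  fun i => if (i <? j)%nat then fst P i
           else if (i <=? d)%nat then delta d eps P j * snd P i
           else fst P i.

(* child Q^P_k of P of type j, for k = j..d+1 *)
Definition child (d : nat) (eps : R) (P : box) (j k : nat) : box :=
  let g := gamma d eps P j in
  if (k <=? d)%nat then
    (fun i => if (i <? k)%nat then g i else fst P i,
     fun i => if (i =? k)%nat then g i else snd P i)
  else (g, snd P).

(* generated boxes together with their type *)
Inductive generated (d : nat) (eps : R) : box -> nat -> Prop :=
| gen_root : generated d eps Id 1
| gen_child : forall P j k, generated d eps P j -> (j <= d)%nat ->
    W d P > eps -> (j <= k <= d + 1)%nat ->
    generated d eps (child d eps P j k) k.

(* leaves: generated boxes that are not decomposed (membership in P^d_eps) *)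
Definition leaf (d : nat) (eps : R) (P : box) : Prop :=
  exists j, generated d eps P j /\ (j = (d + 1)%nat \/ W d P <= eps).

(* Q^{(r)}_{(j_1,...,j_r)} obtained from a box P of type j following path l *)
Fixpoint Qfrom (d : nat) (eps : R) (P : box) (j : nat) (l : list nat) : box :=
  match l with
  | nil => P
  | k :: l' => Qfrom d eps (child d eps P j k) k l'
  end.

Definition Qidx (d : nat) (eps : R) (l : list nat) : box := Qfrom d eps Id 1 l.

(* the path l = (j_1,...,j_r) lies in S^r and Q^{(r)}_l is generated:
   every ancestor has weight > eps and j_{s} <= j_{s+1} <= d *)
Fixpoint path_ok (d : nat) (eps : R) (P : box) (j : nat) (l : list nat) : Prop :=
  match l with
  | nil => True
  | k :: l' => W d P > eps /\ (j <= k <= d)%nat /\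
               path_ok d eps (child d eps P j k) k l'
  end.

Definition idx_ok (d : nat) (eps : R) (l : list nat) : Prop := path_ok d eps Id 1 l.

Definition is_height (d : nat) (eps : R) (h : nat) : Prop :=
  (W d Id <= eps /\ h = 0%nat) \/
  (W d Id > eps /\ (1 <= h)%nat /\
   (exists l, length l = (h - 1)%nat /\ idx_ok d eps l /\ W d (Qidx d eps l) > eps) /\
   (forall l, idx_ok d eps l -> W d (Qidx d eps l) > eps -> (length l + 1 <= h)%nat)).

(* ceiling: ceilR x = smallest integer >= x  (up y is the integer with y < up y <= y+1) *)
Definition ceilR (x : R) : Z := (1 - up (- x))%Z.

From Stdlib Require Import Reals List Arith ZArith Lra Lia Wf_nat.
Open Scope R_scope.

(* Each decomposition step multiplies the weight by [delta^P], and the invariant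
   [W^(d-j+1) (W - eps)^(j-1) <= V^d], with [V] the denominator of [delta^P], holds
   at the root and passes to every child; it forces [(delta^P)^d <= (W - eps) / W].
   So after [r] steps the weight is at most the [r]-th iterate of
   [w |-> w ((w - eps) / w)^(1/d)] at [1], which is exactly the weight of [Q_{1_r}]:
   along the all-ones path the weight stays above [eps] longest.  Each iteration
   lowers the weight by at least [eps / d], which bounds the height.  The leaves are
   indexed by nondecreasing sequences of length at most [h] with values in
   [1..d+1], at most [C(h+d, d)] of them, and AM-GM on [(h+1)...(h+d)] gives the
   counting bounds. *)

Lemma prodn_ext f g a n :
  (forall i, (a <= i < a + n)%nat -> f i = g i) -> prodn f a n = prodn g a n.
Proof.
  revert a; induction n as [|n IH]; intros a H; simpl; auto.
  rewrite (H a) by lia. rewrite (IH (S a)); auto. intros; apply H; lia.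
Qed.

Lemma prodn_add f a n m : prodn f a (n + m) = prodn f a n * prodn f (a + n) m.
Proof.
  revert a; induction n as [|n IH]; intros a; simpl.
  - rewrite Nat.add_0_r; ring.
  - rewrite IH, <- Nat.add_succ_comm; ring.
Qed.

Lemma prodn_pos f a n :
  (forall i, (a <= i < a + n)%nat -> 0 < f i) -> 0 < prodn f a n.
Proof.
  revert a; induction n as [|n IH]; intros a H; simpl; [lra|].
  apply Rmult_lt_0_compat; [apply H; lia | apply IH; intros; apply H; lia].
Qed.

Lemma prodn_eq0 f a n i : (a <= i < a + n)%nat -> f i = 0 -> prodn f a n = 0.
Proof.
  revert a; induction n as [|n IH]; intros a Hi H; simpl; [lia|].
  destruct (Nat.eq_dec a i) as [->|]; [rewrite H; ring|].
  rewrite (IH (S a)); [ring | lia | auto].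
Qed.

Lemma prodn_scal f g c a n :
  (forall i, (a <= i < a + n)%nat -> g i = c * f i) -> prodn g a n = c ^ n * prodn f a n.
Proof.
  revert a; induction n as [|n IH]; intros a H; simpl; [ring|].
  rewrite (H a) by lia. rewrite (IH (S a)); [ring|]. intros; apply H; lia.
Qed.

Lemma prodn_update f g c a n k :
  (a <= k < a + n)%nat -> g k = c * f k ->
  (forall i, (a <= i < a + n)%nat -> i <> k -> g i = f i) ->
  prodn g a n = c * prodn f a n.
Proof.
  revert a; induction n as [|n IH]; intros a Hk Hg H; simpl; [lia|].
  destruct (Nat.eq_dec a k) as [->|].
  - rewrite Hg, (prodn_ext g f); [ring|]. intros; apply H; lia.
  - rewrite (H a) by lia. rewrite (IH (S a)); [ring | lia | auto |]. intros; apply H; lia.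
Qed.

Lemma prodn_const c a n : prodn (fun _ => c) a n = c ^ n.
Proof. revert a; induction n as [|n IH]; intros; simpl; [|rewrite IH]; auto. Qed.

Lemma pow_lt_compat_l x y n : 0 <= x < y -> n <> 0%nat -> x ^ n < y ^ n.
Proof.
  intros Hxy Hn. destruct n as [|n]; [lia|]. clear Hn.
  induction n as [|n IH]; simpl in *; [lra|].
  assert (0 <= x * x ^ n) by (apply Rmult_le_pos; [|apply pow_le]; lra).
  apply Rle_lt_trans with (x * (y * y ^ n)); [apply Rmult_le_compat_l; lra|].
  apply Rmult_lt_compat_r; lra.
Qed.

Lemma pow_le_reg_l x y n : 0 <= x -> 0 <= y -> n <> 0%nat -> x ^ n <= y ^ n -> x <= y.
Proof.
  intros Hx Hy Hn H. destruct (Rle_lt_dec x y) as [|Hyx]; auto.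
  pose proof (pow_lt_compat_l y x n (conj Hy Hyx) Hn). lra.
Qed.

Lemma Bernoulli_ineq t n : -1 <= t -> 1 + INR n * t <= (1 + t) ^ n.
Proof.
  intros Ht. induction n as [|n IH]; [simpl; lra|].
  rewrite S_INR. simpl pow. pose proof (pos_INR n).
  apply Rle_trans with ((1 + t) * (1 + INR n * t)); [nra|].
  apply Rmult_le_compat_l; lra.
Qed.

(* [ln] is [0] on nonpositive reals, so [Rpower] is [1] there. *)
Lemma Rpower_le0 x y : x <= 0 -> Rpower x y = 1.
Proof.
  intros Hx. unfold Rpower, ln.
  destruct (Rlt_dec 0 x); [exfalso; lra|]. rewrite Rmult_0_r; apply exp_0.
Qed.

Lemma Rpower_gt0 x y : 0 < Rpower x y.
Proof. apply exp_pos. Qed.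

Lemma Rpower_inv_INR_pow x m : 0 < x -> m <> 0%nat -> Rpower x (/ INR m) ^ m = x.
Proof.
  intros Hx Hm. rewrite <- Rpower_pow by apply Rpower_gt0.
  rewrite Rpower_mult, Rinv_l by (apply not_0_INR; auto). apply Rpower_1; auto.
Qed.

(* The two power inequalities behind the invariant of [weight_inv] below:
   [t] plays the role of [delta^P], [V] of [mixed_vol P j], [w] of [W P],
   [m = d - j + 1], [a = j - 1] and, for the child of type [k], [b = k - j],
   [n = d - k]. *)
Lemma pow_root_bound (m a : nat) (t V w e : R) :
  m <> 0%nat -> 0 < t -> 0 < V -> 0 < w -> e < w ->
  t ^ m * V = w - e -> w ^ m * (w - e) ^ a <= V ^ (m + a) ->
  t ^ (m + a) * w <= w - e.
Proof.
  intros Hm Ht HV Hw He Hroot Hinv.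
  apply (pow_le_reg_l _ _ m); [apply Rmult_le_pos; [apply pow_le|]; lra | lra | auto |].
  apply Rmult_le_reg_r with ((w - e) ^ a); [apply pow_lt; lra|].
  assert (E : (w - e) ^ m * (w - e) ^ a = t ^ ((m + a) * m) * V ^ (m + a)).
  { rewrite <- pow_add, <- Hroot, Rpow_mult_distr, <- pow_mult.
    rewrite (Nat.mul_comm m). reflexivity. }
  rewrite E, Rpow_mult_distr, <- pow_mult, Rmult_assoc.
  apply Rmult_le_compat_l; [apply pow_le; lra | exact Hinv].
Qed.

Lemma pow_root_bound_child (a b n : nat) (t V w e : R) :
  0 < t -> 0 < V -> 0 <= e -> e < t * w ->
  t ^ (b + n + 1) * V = w - e -> t ^ (a + b + n + 1) * w <= w - e ->
  (t * w) ^ (n + 1) * (t * w - e) ^ (a + b) <= (t ^ (b + 1) * V) ^ (a + b + n + 1).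
Proof.
  intros Ht HV He Hchild Hroot Hbound.
  set (D := (a + b + n + 1)%nat) in *.
  assert (Hw : 0 < w) by (destruct (Rle_lt_dec w 0); [nra | auto]).
  assert (Ht1 : t <= 1).
  { apply (pow_le_reg_l _ _ D); [lra | lra | unfold D; lia |].
    rewrite pow1. apply Rmult_le_reg_r with w; [auto|]. lra. }
  assert (Hwe : 0 < w - e) by nra.
  apply Rmult_le_reg_l with (t ^ (n * D)); [apply pow_lt; lra|].
  assert (Hrhs : t ^ (n * D) * (t ^ (b + 1) * V) ^ D = (w - e) ^ D).
  { rewrite <- Hroot, !Rpow_mult_distr, <- !pow_mult, <- Rmult_assoc, <- pow_add.
    do 2 f_equal. unfold D. nia. }
  rewrite Hrhs.
  (* [t w - e <= t (w - e)] because [t <= 1]; the rest is [t^D w <= w - e]. *)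
  apply Rle_trans with (t ^ (n * D) * ((t * w) ^ (n + 1) * (t * (w - e)) ^ (a + b))).
  { apply Rmult_le_compat_l; [apply pow_le; lra|].
    apply Rmult_le_compat_l; [apply pow_le; nra|]. apply pow_incr. nra. }
  replace (t ^ (n * D) * ((t * w) ^ (n + 1) * (t * (w - e)) ^ (a + b)))
    with ((t ^ D * w) ^ (n + 1) * (w - e) ^ (a + b)).
  2:{ rewrite !Rpow_mult_distr, <- !pow_mult.
      replace (D * (n + 1))%nat with (n * D + (n + 1) + (a + b))%nat by (unfold D; nia).
      rewrite !pow_add. ring. }
  replace ((w - e) ^ D) with ((w - e) ^ (n + 1) * (w - e) ^ (a + b))
    by (rewrite <- pow_add; f_equal; unfold D; lia).
  apply Rmult_le_compat_r; [apply pow_le; lra|].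
  apply pow_incr. split; [apply Rmult_le_pos; [apply pow_le|]|]; lra.
Qed.

Lemma ceilR_ge x : x <= IZR (ceilR x).
Proof.
  unfold ceilR. destruct (archimed (- x)) as [_ Hup].
  rewrite minus_IZR. simpl. lra.
Qed.

Fixpoint rising (c : R) (n : nat) : R :=
  match n with
  | O => 1
  | S n => c * rising (c + 1) n
  end.

Lemma rising_S n c : rising c (S n) = rising c n * (c + INR n).
Proof.
  revert c; induction n as [|n IH]; intros c; [simpl; ring|].
  change (rising c (S (S n))) with (c * rising (c + 1) (S n)).
  rewrite IH, S_INR. simpl. ring.
Qed.

Lemma rising_ge0 n c : 0 <= c -> 0 <= rising c n.
Proof.
  revert c; induction n as [|n IH]; intros c Hc; simpl; [lra|].
  apply Rmult_le_pos; [|apply IH]; lra.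
Qed.

Lemma rising_le n c c' : 0 <= c <= c' -> rising c n <= rising c' n.
Proof.
  revert c c'; induction n as [|n IH]; intros c c' Hc; simpl; [lra|].
  apply Rmult_le_compat; [lra | apply rising_ge0; lra | lra | apply IH; lra].
Qed.

Lemma fact_add_rising h n : INR (fact (h + n)) = INR (fact h) * rising (INR h + 1) n.
Proof.
  induction n as [|n IH]; [rewrite Nat.add_0_r; simpl; ring|].
  rewrite Nat.add_succ_r, rising_S, fact_simpl, mult_INR, IH, S_INR, plus_INR. ring.
Qed.

Lemma C_add_rising h n : C (h + n) n = rising (INR h + 1) n / INR (fact n).
Proof.
  unfold C. replace (h + n - n)%nat with h by lia. rewrite fact_add_rising.
  field. split; apply INR_fact_neq_0.
Qed.

Lemma C_add_ge1 h n : 1 <= C (h + n) n.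
Proof.
  rewrite C_add_rising. pose proof (INR_fact_lt_0 n).
  apply Rmult_le_reg_r with (INR (fact n)); [auto|].
  unfold Rdiv. rewrite Rmult_assoc, Rinv_l, Rmult_1_l, Rmult_1_r by lra.
  replace (INR (fact n)) with (rising (INR 0 + 1) n)
    by (rewrite <- (Rmult_1_l (rising _ _)); symmetry; exact (fact_add_rising 0 n)).
  apply rising_le. pose proof (pos_INR h). simpl. lra.
Qed.

(* Pairing the factors [c + i] and [c + n - 1 - i] (AM-GM). *)
Lemma rising_le_pow n c : 0 <= c -> rising c n <= (c + (INR n - 1) / 2) ^ n.
Proof.
  revert c; induction n as [n IH] using lt_wf_ind; intros c Hc.
  destruct n as [|[|n]]; [simpl; lra | simpl; lra |].
  change (rising c (S (S n))) with (c * rising (c + 1) (S n)). rewrite rising_S.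
  set (m := c + (INR (S (S n)) - 1) / 2).
  assert (Hm : c + 1 + (INR n - 1) / 2 = m) by (unfold m; rewrite !S_INR; field).
  pose proof (IH n ltac:(lia) (c + 1) ltac:(lra)) as Hrec. rewrite Hm in Hrec.
  assert (Hpair : c * (c + 1 + INR n) <= m * m).
  { assert (m * m - c * (c + 1 + INR n) = ((INR n + 1) / 2) ^ 2)
      by (unfold m; rewrite !S_INR; field).
    pose proof (pow2_ge_0 ((INR n + 1) / 2)). lra. }
  pose proof (rising_ge0 n (c + 1) ltac:(lra)). pose proof (pos_INR n).
  replace (c * (rising (c + 1) n * (c + 1 + INR n)))
    with (rising (c + 1) n * (c * (c + 1 + INR n))) by ring.
  replace (m ^ S (S n)) with (m ^ n * (m * m)) by (simpl; ring).
  apply Rmult_le_compat; auto. nra.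
Qed.

Lemma sum_C_seq f N n j : (j + n = N)%nat ->
  fold_right Rplus 0 (map (fun k => C (f + (N - k)) (N - k)) (seq j (S n))) = C (S f + n) n.
Proof.
  revert j; induction n as [|n IH]; intros j Hj.
  - assert (C0 : forall m, C m 0 = 1)
      by (intros m; unfold C; rewrite Nat.sub_0_r; simpl; field; apply INR_fact_neq_0).
    simpl. replace (N - j)%nat with 0%nat by lia. rewrite !C0. ring.
  - change (seq j (S (S n))) with (j :: seq (S j) (S n)). rewrite map_cons.
    cbn [fold_right]. rewrite IH by lia. replace (N - j)%nat with (S n) by lia.
    replace (S f + S n)%nat with (S (f + S n)) by lia.
    rewrite <- pascal by lia. replace (S f + n)%nat with (f + S n)%nat by lia. ring.
Qed.

Lemma INR_list_sum_le {A : Type} (g : A -> nat) (c : A -> R) l :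
  (forall x, In x l -> INR (g x) <= c x) ->
  INR (list_sum (map g l)) <= fold_right Rplus 0 (map c l).
Proof.
  induction l as [|x l IH]; intros H; simpl; [lra|].
  rewrite plus_INR. apply Rplus_le_compat; [apply H; simpl; auto |].
  apply IH. intros; apply H; simpl; auto.
Qed.

Section Decomposition.

Variables (d : nat) (eps : R).
Hypotheses (d_pos : (1 <= d)%nat) (eps_pos : 0 < eps).

(* The denominator of [delta^P] for a box of type [j]. *)
Definition mixed_vol (P : box) (j : nat) : R :=
  prodn (fst P) 1 (j - 1) * prodn (snd P) j (d - j + 1).

(* Shape of every generated box of type [j <= d]. *)
Definition shaped (P : box) (j : nat) : Prop :=
  (forall i, (j <= i <= d)%nat -> fst P i = 0) /\
  (forall i, (1 <= i < j)%nat -> 0 < fst P i) /\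
  (forall i, (1 <= i <= d)%nat -> 0 < snd P i).

Lemma delta_mixed_vol P j :
  delta d eps P j = Rpower ((prodd d (snd P) - eps) / mixed_vol P j) (/ INR (d - j + 1)).
Proof. destruct P; reflexivity. Qed.

Lemma delta_gt0 P j : 0 < delta d eps P j.
Proof. rewrite delta_mixed_vol; apply Rpower_gt0. Qed.

Lemma child_fst P j k i : (k <= d)%nat ->
  fst (child d eps P j k) i = if (i <? k)%nat then gamma d eps P j i else fst P i.
Proof. intros Hk. apply Nat.leb_le in Hk. unfold child; now rewrite Hk. Qed.

Lemma child_snd P j k i : (k <= d)%nat ->
  snd (child d eps P j k) i = if (i =? k)%nat then gamma d eps P j i else snd P i.
Proof. intros Hk. apply Nat.leb_le in Hk. unfold child; now rewrite Hk. Qed.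

Lemma gamma_lt P j i : (i < j)%nat -> gamma d eps P j i = fst P i.
Proof. intros Hi. apply Nat.ltb_lt in Hi. unfold gamma; now rewrite Hi. Qed.

Lemma gamma_ge P j i : (j <= i <= d)%nat -> gamma d eps P j i = delta d eps P j * snd P i.
Proof.
  intros [Hji Hid]. apply Nat.ltb_ge in Hji. apply Nat.leb_le in Hid.
  unfold gamma; now rewrite Hji, Hid.
Qed.

Lemma child_fst_ge P j k i : (k <= i)%nat -> (k <= d)%nat ->
  fst (child d eps P j k) i = fst P i.
Proof. intros Hi Hk. rewrite child_fst by auto. now replace (i <? k)%nat with false
  by (symmetry; apply Nat.ltb_ge; auto). Qed.

Lemma child_fst_lt P j k i : (i < k)%nat -> (k <= d)%nat ->
  fst (child d eps P j k) i = gamma d eps P j i.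
Proof. intros Hi Hk. rewrite child_fst by auto. now replace (i <? k)%nat with true
  by (symmetry; apply Nat.ltb_lt; auto). Qed.

Lemma child_snd_neq P j k i : i <> k -> (k <= d)%nat ->
  snd (child d eps P j k) i = snd P i.
Proof. intros Hi Hk. rewrite child_snd by auto. now replace (i =? k)%nat with false
  by (symmetry; apply Nat.eqb_neq; auto). Qed.

Lemma child_snd_eq P j k : (j <= k <= d)%nat ->
  snd (child d eps P j k) k = delta d eps P j * snd P k.
Proof. intros Hk. rewrite child_snd, Nat.eqb_refl by lia. apply gamma_ge; lia. Qed.

Lemma W_shaped P j : (1 <= j <= d)%nat -> shaped P j -> W d P = prodd d (snd P).
Proof.
  intros Hj [Hzero _]. unfold W, prodd.
  rewrite (prodn_eq0 (fst P) 1 d d); [ring | lia | apply Hzero; lia].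
Qed.

Lemma shaped_child P j k : (1 <= j <= k)%nat -> (k <= d)%nat ->
  shaped P j -> shaped (child d eps P j k) k.
Proof.
  intros Hj Hk [Hzero [Hlo Hhi]]. pose proof (delta_gt0 P j) as Hdelta.
  split; [|split].
  - intros i Hi. rewrite child_fst_ge by lia. apply Hzero; lia.
  - intros i Hi. rewrite child_fst_lt by lia.
    destruct (Nat.lt_ge_cases i j).
    + rewrite gamma_lt by auto. apply Hlo; lia.
    + rewrite gamma_ge by lia. apply Rmult_lt_0_compat; [auto | apply Hhi; lia].
  - intros i Hi. destruct (Nat.eq_dec i k) as [->|].
    + rewrite child_snd_eq by lia. apply Rmult_lt_0_compat; [auto | apply Hhi; lia].
    + rewrite child_snd_neq by auto. apply Hhi; lia.
Qed.

Lemma W_child P j k : (1 <= j <= k)%nat -> (k <= d)%nat -> shaped P j ->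
  W d (child d eps P j k) = delta d eps P j * W d P.
Proof.
  intros Hj Hk Hshape.
  rewrite (W_shaped P j), (W_shaped _ k) by first [lia | assumption | apply shaped_child; auto].
  apply prodn_update with k; [lia | apply child_snd_eq; lia |].
  intros i _ Hik. apply child_snd_neq; auto.
Qed.

Lemma mixed_vol_child P j k : (1 <= j <= k)%nat -> (k <= d)%nat ->
  mixed_vol (child d eps P j k) k = delta d eps P j ^ (k - j + 1) * mixed_vol P j.
Proof.
  intros Hj Hk. unfold mixed_vol. set (t := delta d eps P j).
  replace (k - 1)%nat with ((j - 1) + (k - j))%nat by lia.
  replace (d - j + 1)%nat with ((k - j) + (d - k + 1))%nat by lia.
  rewrite (prodn_add (fst _) 1), (prodn_add (snd P) j).
  replace (1 + (j - 1))%nat with j by lia.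
  replace (j + (k - j))%nat with k by lia.
  rewrite (prodn_ext _ (fst P) 1 (j - 1))
    by (intros; rewrite child_fst_lt, gamma_lt by lia; auto).
  rewrite (prodn_scal (snd P) _ t j (k - j))
    by (intros; rewrite child_fst_lt, gamma_ge by lia; auto).
  rewrite (prodn_update (snd P) _ t k (d - k + 1) k);
    [| lia | apply child_snd_eq; lia | intros; apply child_snd_neq; auto].
  rewrite pow_add. simpl. ring.
Qed.

Lemma mixed_vol_gt0 P j : (1 <= j <= d)%nat -> shaped P j -> 0 < mixed_vol P j.
Proof.
  intros Hj [_ [Hlo Hhi]]. unfold mixed_vol.
  apply Rmult_lt_0_compat; apply prodn_pos; intros; [apply Hlo | apply Hhi]; lia.
Qed.

Lemma delta_pow_mixed_vol P j : (1 <= j <= d)%nat -> shaped P j -> eps < W d P ->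
  delta d eps P j ^ (d - j + 1) * mixed_vol P j = W d P - eps.
Proof.
  intros Hj Hshape HW. pose proof (mixed_vol_gt0 P j Hj Hshape).
  rewrite (W_shaped P j Hj Hshape) in *. rewrite delta_mixed_vol, Rpower_inv_INR_pow by
    (try (apply Rdiv_lt_0_compat; lra); lia).
  field. lra.
Qed.

Definition weight_inv (P : box) (j : nat) : Prop :=
  eps < W d P -> W d P ^ (d - j + 1) * (W d P - eps) ^ (j - 1) <= mixed_vol P j ^ d.

Lemma delta_pow_d_le P j : (1 <= j <= d)%nat -> shaped P j -> weight_inv P j ->
  eps < W d P -> delta d eps P j ^ d * W d P <= W d P - eps.
Proof.
  intros Hj Hshape Hinv HW.
  pose proof (pow_root_bound (d - j + 1) (j - 1) (delta d eps P j) (mixed_vol P j) (W d P) eps)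
    as H.
  replace (d - j + 1 + (j - 1))%nat with d in H by lia.
  apply H; auto; try lia; try lra.
  - apply delta_gt0.
  - apply mixed_vol_gt0; auto.
  - now apply delta_pow_mixed_vol.
Qed.

Lemma weight_inv_child P j k : (1 <= j <= k)%nat -> (k <= d)%nat ->
  shaped P j -> weight_inv P j -> eps < W d P -> weight_inv (child d eps P j k) k.
Proof.
  intros Hj Hk Hshape Hinv HW. unfold weight_inv.
  rewrite W_child, mixed_vol_child by auto. intros Hchild.
  pose proof (pow_root_bound_child (j - 1) (k - j) (d - k) (delta d eps P j)
    (mixed_vol P j) (W d P) eps) as H.
  replace (k - j + (d - k) + 1)%nat with (d - j + 1)%nat in H by lia.
  replace (j - 1 + (k - j) + (d - k) + 1)%nat with d in H by lia.
  replace (j - 1 + (k - j))%nat with (k - 1)%nat in H by lia.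
  apply H; try lra.
  - apply delta_gt0.
  - apply mixed_vol_gt0; [lia | auto].
  - apply delta_pow_mixed_vol; [lia | auto | auto].
  - apply delta_pow_d_le; [lia | auto | auto | auto].
Qed.

Lemma W_Id : W d Id = 1.
Proof.
  unfold W, prodd, Id; simpl. rewrite !prodn_const, pow1, pow_i by lia. ring.
Qed.

Lemma shaped_Id : shaped Id 1.
Proof. repeat split; intros; simpl; first [lra | exfalso; lia]. Qed.

Lemma weight_inv_Id : weight_inv Id 1.
Proof.
  intros _. rewrite W_Id. unfold mixed_vol, Id; simpl.
  rewrite prodn_const, !pow1, Rmult_1_l, pow1. lra.
Qed.

(* Weight of the type-1 child of a box [P] of type 1 with [W P = w]; by [Rpower_le0]
   it fixes every [w] in [(0, eps]]. *)
Definition wstep (w : R) : R := w * Rpower ((w - eps) / w) (/ INR d).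

Lemma wstep_gt0 w : 0 < w -> 0 < wstep w.
Proof. intros Hw. apply Rmult_lt_0_compat; [auto | apply Rpower_gt0]. Qed.

Lemma wstep_fixed w : 0 < w <= eps -> wstep w = w.
Proof.
  intros Hw. unfold wstep. rewrite Rpower_le0; [ring|].
  unfold Rdiv. pose proof (Rinv_0_lt_compat w). nra.
Qed.

Lemma wstep_le w1 w2 : eps < w1 <= w2 -> wstep w1 <= wstep w2.
Proof.
  intros Hw. unfold wstep. apply Rmult_le_compat; [lra | left; apply Rpower_gt0 | lra |].
  apply Rle_Rpower_l; [left; apply Rinv_0_lt_compat, lt_0_INR; lia|].
  unfold Rdiv. rewrite !Rmult_minus_distr_r, !Rinv_r by lra.
  assert (/ w2 <= / w1) by (apply Rinv_le_contravar; lra).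
  assert (w1 * / w1 = 1) by (field; lra).
  split; [|nra]. pose proof (Rinv_0_lt_compat w1). nra.
Qed.

Lemma wstep_le_sub w : eps < w -> wstep w <= w - eps / INR d.
Proof.
  intros Hw. assert (HD : 1 <= INR d) by (apply (le_INR 1); auto).
  assert (Hs : eps / (INR d * w) <= eps / w).
  { apply Rmult_le_compat_l; [lra|]. apply Rinv_le_contravar; nra. }
  assert (Hs1 : eps / w < 1).
  { apply Rmult_lt_reg_r with w; [lra|]. unfold Rdiv. rewrite Rmult_assoc, Rinv_l; lra. }
  assert (Hs0 : 0 <= eps / (INR d * w)).
  { unfold Rdiv. apply Rmult_le_pos; [lra | left; apply Rinv_0_lt_compat; nra]. }
  unfold wstep. replace (w - eps / INR d) with (w * (1 - eps / (INR d * w))) by (field; lra).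
  apply Rmult_le_compat_l; [lra|].
  apply (pow_le_reg_l _ _ d); [left; apply Rpower_gt0 | lra | lia |].
  rewrite Rpower_inv_INR_pow by (try (apply Rdiv_lt_0_compat; lra); lia).
  eapply Rle_trans; [|apply Bernoulli_ineq; lra].
  right. field. lra.
Qed.

Lemma W_child_le_wstep P j k : (1 <= j <= k)%nat -> (k <= d)%nat ->
  shaped P j -> weight_inv P j -> eps < W d P -> W d (child d eps P j k) <= wstep (W d P).
Proof.
  intros Hj Hk Hshape Hinv HW.
  pose proof (delta_pow_d_le P j ltac:(lia) Hshape Hinv HW) as Hdelta.
  rewrite W_child by auto. unfold wstep. rewrite Rmult_comm.
  apply Rmult_le_compat_l; [lra|].
  apply (pow_le_reg_l _ _ d); [left; apply delta_gt0 | left; apply Rpower_gt0 | lia |].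
  rewrite Rpower_inv_INR_pow by (try (apply Rdiv_lt_0_compat; lra); lia).
  apply Rmult_le_reg_r with (W d P); [lra|]. unfold Rdiv.
  rewrite Rmult_assoc, Rinv_l by lra. lra.
Qed.

(* Among all decomposition paths of a given length, the all-ones path has the
   largest final weight. *)
Lemma W_Qfrom_le_iter l : forall P j w, (1 <= j <= d)%nat -> shaped P j -> weight_inv P j ->
  path_ok d eps P j l -> W d P <= w -> W d (Qfrom d eps P j l) <= Nat.iter (length l) wstep w.
Proof.
  induction l as [|k l IH]; intros P j w Hj Hshape Hinv Hpath Hw; simpl in *; auto.
  destruct Hpath as [HW [Hk Hpath]]. rewrite <- Nat.iter_succ, Nat.iter_succ_r.
  apply IH; auto; [lia | apply shaped_child | apply weight_inv_child |]; auto; try lia.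
  apply Rle_trans with (wstep (W d P)); [apply W_child_le_wstep; auto; lia|].
  apply wstep_le; lra.
Qed.

Lemma iter_wstep_gt0 n w : 0 < w -> 0 < Nat.iter n wstep w.
Proof. intros Hw; induction n; simpl; auto using wstep_gt0. Qed.

Lemma iter_wstep_le_eps n m w : 0 < w -> (n <= m)%nat ->
  Nat.iter n wstep w <= eps -> Nat.iter m wstep w <= eps.
Proof.
  intros Hw Hnm H. induction Hnm; auto. simpl.
  rewrite wstep_fixed; auto. split; auto using iter_wstep_gt0.
Qed.

Lemma iter_wstep_le_sub r : eps < Nat.iter r wstep 1 ->
  Nat.iter r wstep 1 <= 1 - INR r * eps / INR d.
Proof.
  induction r as [|r IH]; intros Hr; [simpl; lra|].
  assert (Hprev : eps < Nat.iter r wstep 1).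
  { destruct (Rlt_le_dec eps (Nat.iter r wstep 1)) as [|Hle]; auto.
    simpl in Hr. rewrite wstep_fixed in Hr; [lra|]. split; [apply iter_wstep_gt0; lra | auto]. }
  rewrite Nat.iter_succ. eapply Rle_trans; [apply wstep_le_sub; auto|].
  specialize (IH Hprev). rewrite S_INR. unfold Rdiv in *. lra.
Qed.

Lemma delta_type1 P : shaped P 1 -> delta d eps P 1 * W d P = wstep (W d P).
Proof.
  intros Hshape. unfold wstep. rewrite delta_mixed_vol, (W_shaped P 1) by (auto; lia).
  unfold mixed_vol. simpl prodn. replace (d - 1 + 1)%nat with d by lia.
  unfold prodd. rewrite Rmult_1_l. ring.
Qed.

Lemma W_Qfrom_ones n : forall P, shaped P 1 ->
  W d (Qfrom d eps P 1 (repeat 1%nat n)) = Nat.iter n wstep (W d P).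
Proof.
  induction n as [|n IH]; intros P Hshape; cbn [repeat Qfrom]; auto.
  rewrite IH by (apply shaped_child; auto; lia).
  rewrite Nat.iter_succ_r, W_child, delta_type1 by (auto; lia). reflexivity.
Qed.

Lemma path_ok_ones n : forall P, shaped P 1 ->
  (forall r, (r < n)%nat -> eps < Nat.iter r wstep (W d P)) -> path_ok d eps P 1 (repeat 1%nat n).
Proof.
  induction n as [|n IH]; intros P Hshape H; cbn [repeat path_ok]; auto.
  split; [apply (H 0%nat); lia | split; [lia|]].
  apply IH; [apply shaped_child; auto; lia|].
  intros r Hr. rewrite W_child, delta_type1 by (auto; lia).
  rewrite <- Nat.iter_succ_r. apply H; lia.
Qed.

Lemma W_Qidx_ones r : W d (Qidx d eps (repeat 1%nat r)) = Nat.iter r wstep 1.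
Proof. unfold Qidx. rewrite W_Qfrom_ones, W_Id; auto using shaped_Id. Qed.

Fixpoint end_type (j : nat) (l : list nat) : nat :=
  match l with
  | nil => j
  | k :: l' => end_type k l'
  end.

(* Like [path_ok], but the last step may also produce the child of type [d + 1]. *)
Fixpoint decomp_path (P : box) (j : nat) (l : list nat) : Prop :=
  match l with
  | nil => True
  | k :: l' => eps < W d P /\ (j <= d)%nat /\ (j <= k <= d + 1)%nat /\
               decomp_path (child d eps P j k) k l'
  end.

Lemma end_type_snoc l : forall j k, end_type j (l ++ k :: nil) = k.
Proof. induction l; intros; simpl; auto. Qed.

Lemma Qfrom_snoc l : forall P j k,
  Qfrom d eps P j (l ++ k :: nil) = child d eps (Qfrom d eps P j l) (end_type j l) k.
Proof. induction l; intros; simpl; auto. Qed.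

Lemma decomp_path_snoc l : forall P j k, decomp_path P j l ->
  eps < W d (Qfrom d eps P j l) -> (end_type j l <= d)%nat ->
  (end_type j l <= k <= d + 1)%nat -> decomp_path P j (l ++ k :: nil).
Proof.
  induction l; intros P j k Hl HW Hend Hk; simpl in *; [repeat split; auto; lia|].
  destruct Hl as [HWP [Hj [Ha Hl]]]. repeat split; auto; try lia.
Qed.

Lemma decomp_path_snoc_inv l : forall P j k, decomp_path P j (l ++ k :: nil) ->
  path_ok d eps P j l /\ eps < W d (Qfrom d eps P j l).
Proof.
  induction l as [|k' l IH]; intros P j k Hl; simpl in *; [tauto|].
  destruct Hl as [HW [Hj [Hk Hl]]]. destruct (IH _ _ _ Hl) as [Hpath HWl].
  repeat split; auto; [lia|]. destruct l; simpl in Hl; lia.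
Qed.

Lemma generated_decomp_path P j : generated d eps P j ->
  exists l, decomp_path Id 1 l /\ Qfrom d eps Id 1 l = P /\ end_type 1 l = j.
Proof.
  induction 1 as [|P j k _ [l [Hl [HP Hend]]] Hj HW Hk]; [exists nil; simpl; auto|].
  exists (l ++ k :: nil). rewrite Qfrom_snoc, end_type_snoc, HP, Hend.
  repeat split; auto. apply decomp_path_snoc; rewrite ?HP, ?Hend; auto; lia.
Qed.

(* Boxes reached from [P] (of type [j]) by at most [f] decomposition steps and
   not decomposed further within that depth. *)
Fixpoint tree (f : nat) (P : box) (j : nat) : list box :=
  match f with
  | O => P :: nil
  | S f' =>
      if (j <=? d)%nat then
        if Rlt_dec eps (W d P)
        then flat_map (fun k => tree f' (child d eps P j k) k) (seq j (d + 2 - j))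
        else P :: nil
      else P :: nil
  end.

Lemma In_tree l : forall P j f, decomp_path P j l -> (length l <= f)%nat ->
  end_type j l = (d + 1)%nat \/ W d (Qfrom d eps P j l) <= eps ->
  In (Qfrom d eps P j l) (tree f P j).
Proof.
  induction l as [|k l IH]; intros P j f Hl Hf Hleaf; simpl in *.
  - destruct f as [|f]; simpl; auto.
    destruct (j <=? d)%nat eqn:Hj; [apply Nat.leb_le in Hj | simpl; auto].
    destruct (Rlt_dec eps (W d P)); [|simpl; auto].
    destruct Hleaf; [lia | lra].
  - destruct Hl as [HW [Hj [Hk Hl]]]. destruct f as [|f]; [lia|]. simpl.
    apply Nat.leb_le in Hj. rewrite Hj.
    destruct (Rlt_dec eps (W d P)); [|lra].
    apply in_flat_map. exists k. split; [apply in_seq; lia | apply IH; auto; lia].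
Qed.

Lemma length_tree_le f : forall P j, (j <= d + 1)%nat ->
  INR (length (tree f P j)) <= C (f + (d + 1 - j)) (d + 1 - j).
Proof.
  induction f as [|f IH]; intros P j Hj; simpl tree; [apply (C_add_ge1 0)|].
  destruct (j <=? d)%nat eqn:Hjd; [apply Nat.leb_le in Hjd | apply (C_add_ge1 (S f))].
  destruct (Rlt_dec eps (W d P)); [| apply (C_add_ge1 (S f))].
  rewrite length_flat_map. replace (d + 2 - j)%nat with (S (d + 1 - j)) by lia.
  rewrite <- (sum_C_seq f (d + 1) (d + 1 - j) j) by lia.
  apply INR_list_sum_le. intros k Hk. apply in_seq in Hk. apply IH. lia.
Qed.

Section Height.

Variable h : nat.
Hypotheses (h_le : Nat.iter h wstep 1 <= eps)
  (h_least : forall r, (r < h)%nat -> eps < Nat.iter r wstep 1).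

Lemma path_length_lt_height l : idx_ok d eps l -> eps < W d (Qidx d eps l) ->
  (length l + 1 <= h)%nat.
Proof.
  intros Hl HW.
  pose proof (W_Qfrom_le_iter l Id 1 1 ltac:(lia) shaped_Id weight_inv_Id Hl
    ltac:(rewrite W_Id; lra)) as Hdom.
  destruct (Nat.lt_ge_cases (length l) h); [lia|]. exfalso.
  assert (Nat.iter (length l) wstep 1 <= eps) by (apply iter_wstep_le_eps with h; auto; lra).
  unfold Qidx in HW. lra.
Qed.

Lemma is_height_least : is_height d eps h.
Proof.
  destruct (Rle_lt_dec (W d Id) eps) as [HId|HId]; [left | right]; rewrite W_Id in *.
  - split; auto. destruct h as [|h']; auto.
    specialize (h_least 0%nat ltac:(lia)). simpl in h_least. lra.
  - assert (Hh : h <> 0%nat) by (intros ->; simpl in h_le; lra).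
    repeat split; [auto | lia | | exact path_length_lt_height].
    exists (repeat 1%nat (h - 1)). rewrite repeat_length, W_Qidx_ones.
    repeat split; [| apply h_least; lia].
    apply path_ok_ones; [apply shaped_Id|]. intros r Hr. rewrite W_Id. apply h_least; lia.
Qed.

Lemma height_lt : eps <= 1 -> INR h < INR d * (/ eps - 1) + 1.
Proof.
  intros Heps1. assert (HD : 1 <= INR d) by (apply (le_INR 1); auto).
  assert (Hy : 1 <= / eps) by (rewrite <- Rinv_1; apply Rinv_le_contravar; lra).
  destruct (Nat.eq_dec h 0) as [->|Hh]; [simpl; nra|].
  pose proof (iter_wstep_le_sub (h - 1) (h_least (h - 1) ltac:(lia))) as Hdec.
  pose proof (h_least (h - 1) ltac:(lia)).
  assert (Hlt : INR (h - 1) * eps < INR d * (1 - eps)).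
  { apply Rmult_lt_reg_r with (/ INR d); [apply Rinv_0_lt_compat; lra|].
    replace (INR d * (1 - eps) * / INR d) with (1 - eps) by (field; lra).
    unfold Rdiv in Hdec. lra. }
  rewrite minus_INR in Hlt by lia. simpl INR in Hlt.
  apply Rmult_lt_reg_r with eps; [lra|].
  replace ((INR d * (/ eps - 1) + 1) * eps) with (INR d * (1 - eps) + eps) by (field; lra).
  lra.
Qed.

Lemma leaf_in_tree P : leaf d eps P -> In P (tree h Id 1).
Proof.
  intros [j [Hgen Hleaf]].
  destruct (generated_decomp_path P j Hgen) as [l [Hl [<- <-]]].
  apply In_tree; auto.
  destruct l as [|k l _] using rev_ind; [simpl; lia|].
  destruct (decomp_path_snoc_inv l Id 1 k Hl) as [Hpath HW].
  pose proof (path_length_lt_height l Hpath HW). rewrite length_app. simpl. lia.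
Qed.

Lemma length_leaves_le L : NoDup L -> (forall P, In P L -> leaf d eps P) ->
  INR (length L) <= C (h + d) d.
Proof.
  intros HL Hleaves. apply Rle_trans with (INR (length (tree h Id 1))).
  - apply le_INR, NoDup_incl_length; auto. intros P HP. apply leaf_in_tree; auto.
  - replace (C (h + d) d) with (C (h + (d + 1 - 1)) (d + 1 - 1)) by (f_equal; lia).
    apply length_tree_le. lia.
Qed.

End Height.

Lemma exists_least_height : exists h, Nat.iter h wstep 1 <= eps /\
  (forall r, (r < h)%nat -> eps < Nat.iter r wstep 1).
Proof.
  destruct (dec_inh_nat_subset_has_unique_least_element (fun r => Nat.iter r wstep 1 <= eps))
    as [h [[Hh Hmin] _]].
  - intros n. destruct (Rle_dec (Nat.iter n wstep 1) eps); auto.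
  - assert (HD : 0 < INR d) by (apply lt_0_INR; lia).
    destruct (INR_archimed (eps / INR d) 1) as [n Hn]; [apply Rdiv_lt_0_compat; lra|].
    exists n. destruct (Rle_lt_dec (Nat.iter n wstep 1) eps) as [|Hgt]; auto.
    pose proof (iter_wstep_le_sub n Hgt). unfold Rdiv in *. lra.
  - exists h. split; auto. intros r Hr. apply Rnot_le_lt. intros Hle.
    specialize (Hmin r Hle). lia.
Qed.

End Decomposition.

Lemma INR_lt_le_ceilR (n : nat) x : INR n < x + 1 -> (Z.of_nat n <= ceilR x)%Z.
Proof.
  intros Hn. apply Z.lt_succ_r, lt_IZR.
  rewrite succ_IZR, <- INR_IZR_INZ. pose proof (ceilR_ge x). lra.
Qed.

Lemma C_add_2_le h y : INR h + 1 <= 2 * y -> C (h + 2) 2 <= 2 * (y + / 2) * y.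
Proof.
  intros Hh. rewrite C_add_rising. simpl rising. simpl (INR (fact 2)).
  pose proof (pos_INR h). nra.
Qed.

(* [(h + 1) ... (h + d) <= (h + (d + 1) / 2) ^ d] and [h < d (y - 1) + 1]. *)
Lemma C_add_le_pow h d y : (1 <= d)%nat -> INR h < INR d * (y - 1) + 1 ->
  C (h + d) d <= INR d ^ d / INR (fact d) * (y - / 2 * (1 - 3 / INR d)) ^ d.
Proof.
  intros Hd Hh. assert (HD : 1 <= INR d) by (apply (le_INR 1); auto).
  pose proof (INR_fact_lt_0 d). pose proof (pos_INR h).
  rewrite C_add_rising.
  replace (INR d ^ d / INR (fact d) * (y - / 2 * (1 - 3 / INR d)) ^ d)
    with ((INR d * (y - / 2 * (1 - 3 / INR d))) ^ d / INR (fact d))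
    by (rewrite Rpow_mult_distr; unfold Rdiv; ring).
  replace (INR d * (y - / 2 * (1 - 3 / INR d))) with (INR d * y - INR d / 2 + 3 / 2)
    by (field; lra).
  apply Rmult_le_compat_r; [left; apply Rinv_0_lt_compat; lra|].
  eapply Rle_trans; [apply rising_le_pow; lra|].
  apply pow_incr. lra.
Qed.

Lemma pow_bound_le_inv_pow d y : (3 <= d)%nat -> 1 <= y ->
  INR d ^ d / INR (fact d) * (y - / 2 * (1 - 3 / INR d)) ^ d
    <= INR d ^ d / INR (fact d) * y ^ d.
Proof.
  intros Hd Hy. assert (HD : 3 <= INR d)
    by (replace 3 with (INR 3) by (simpl; ring); apply le_INR; auto).
  pose proof (INR_fact_lt_0 d).
  apply Rmult_le_compat_l.
  - apply Rmult_le_pos; [apply pow_le; lra | left; apply Rinv_0_lt_compat; lra].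
  - apply pow_incr. assert (0 <= 3 / INR d <= 1).
    { split; [apply Rmult_le_pos; [lra | left; apply Rinv_0_lt_compat; lra]|].
      apply Rmult_le_reg_r with (INR d); [lra|]. unfold Rdiv.
      rewrite Rmult_assoc, Rinv_l by lra. lra. }
    lra.
Qed.

Theorem mainTheorem3 (d : nat) (eps : R) :
  (1 <= d)%nat -> 0 < eps <= 1 ->
  (exists h : nat,
      is_height d eps h /\
      W d (Qidx d eps (repeat 1%nat h)) <= eps /\
      (forall r : nat, (r < h)%nat -> W d (Qidx d eps (repeat 1%nat r)) > eps) /\
      (Z.of_nat h <= ceilR (INR d * (/ eps - 1)))%Z) /\
  (d = 2%nat ->
     forall L : list box, NoDup L -> (forall P, In P L -> leaf d eps P) ->
       INR (length L) <= 2 * (/ eps + / 2) * / eps) /\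
  ((3 <= d)%nat ->
     forall L : list box, NoDup L -> (forall P, In P L -> leaf d eps P) ->
       INR (length L) <=
         INR d ^ d / INR (fact d) * (/ eps - / 2 * (1 - 3 / INR d)) ^ d) /\
  ((3 <= d)%nat ->
     INR d ^ d / INR (fact d) * (/ eps - / 2 * (1 - 3 / INR d)) ^ d
       <= INR d ^ d / INR (fact d) * (/ eps) ^ d).
Proof.
  intros Hd [Heps Heps1].
  destruct (exists_least_height d eps Hd Heps) as [h [Hh Hleast]].
  pose proof (height_lt d eps Hd Heps h Hh Hleast Heps1) as Hlt.
  assert (Hy : 1 <= / eps) by (rewrite <- Rinv_1; apply Rinv_le_contravar; lra).
  split; [|split; [|split]].
  - exists h. repeat split.
    + apply is_height_least; auto.
    + rewrite W_Qidx_ones; auto.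
    + intros r Hr. rewrite W_Qidx_ones by auto. apply Hleast; auto.
    + apply INR_lt_le_ceilR; auto.
  - intros -> L HL Hleaves. eapply Rle_trans; [apply (length_leaves_le 2 eps); eauto|].
    apply C_add_2_le. simpl INR in Hlt. lra.
  - intros _ L HL Hleaves. eapply Rle_trans; [apply (length_leaves_le d eps); eauto|].
    apply C_add_le_pow; auto.
  - intros H3. apply pow_bound_le_inv_pow; auto.
Qed.
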